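(* Under the standing setting below, take $\rho(x,y)=\|\nabla h(x,y)\|^2$, let $\alpha>0$, $C_0>0$, and let $(x_0,y_0)$ satisfy $h(x_0,y_0)\le \alpha^2 C_0$. Let $\gamma>0$ satisfy $\gamma\le\min\{\alpha,\frac{1}{L_f+\alpha L_h}\}$ and let $\{(x_k,y_k,\lambda_k)\}_{k\ge0}$ be generated by the Algorithm. Then for every integer $K\ge1$, $$\frac1K\sum_{k=0}^{K-1}\big(\|\Delta_k^x\|^2+\|\Delta_k^y\|^2\big)\le \frac{4(f_0+\alpha^3C_0-\bar f)}{\gamma K}+\frac{2\alpha C_0}{\gamma L_h K}+2\alpha^2L_hC_f^2,$$ and $$\frac1K\sum_{k=0}^{K-1}\big(\|\nabla_x h_k\|^2+\|\nabla_y h_k\|^2\big)\le \frac{2\alpha C_0}{\gamma K}+\frac{2L_h(f_0+\alpha^3C_0-\bar f)}{\gamma K}+\alpha^2L_h^2C_f^2,$$ where $f_0=f(x_0,y_0)$.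
   Context: Standing setting. $f,g:\mathbb{R}^n\times\mathbb{R}^m\to\mathbb{R}$. $f$ is continuously differentiable, $\bar f:=\inf_{(x,y)}f(x,y)>-\infty$, $\nabla f$ is $L_f$-Lipschitz on $\mathbb{R}^{n+m}$, and $\|\nabla f(x,y)\|\le C_f$ for all $(x,y)$. $g$ is twice continuously differentiable, and $h(x,y):=\|\nabla_y g(x,y)\|^2$ is continuously differentiable with $\nabla h$ being $L_h$-Lipschitz ($L_h>0$). Write $\nabla h=(\nabla_x h,\nabla_y h)$ and, for a sequence $(x_k,y_k)$, $f_k=f(x_k,y_k)$, $h_k=h(x_k,y_k)$, $\nabla_x f_k=\nabla_x f(x_k,y_k)$, etc. Given a function $\rho:\mathbb{R}^n\times\mathbb{R}^m\to\mathbb{R}_{\ge0}$, parameters $\alpha,\gamma>0$ and a starting point $(x_0,y_0)$, the Algorithm iterates for $k\ge0$: $$\lambda_k=\frac{\big[-\nabla_x h_k^\top\nabla_x f_k-\nabla_y h_k^\top\nabla_y f_k+\alpha\rho(x_k,y_k)\big]_+}{\|\nabla_x h_k\|^2+\|\nabla_y h_k\|^2}\ \text{ if }\nabla h_k\neq0,\qquad \lambda_k=0\ \text{ if }\nabla h_k=0,$$ where $[t]_+=\max\{0,t\}$; then $\Delta_k^x=-\nabla_x f_k-\lambda_k\nabla_x h_k$, $\Delta_k^y=-\nabla_y f_k-\lambda_k\nabla_y h_k$, $x_{k+1}=x_k+\gamma\Delta_k^x$, $y_{k+1}=y_k+\gamma\Delta_k^y$. (Equivalently, $(\Delta_k^x,\Delta_k^y)$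 and $\lambda_k$ are the primal solution and multiplier of the QP $\min_{\Delta^x,\Delta^y}\frac12\|\Delta^x+\nabla_xf_k\|^2+\frac12\|\Delta^y+\nabla_yf_k\|^2$ s.t. $\nabla_xh_k^\top\Delta^x+\nabla_yh_k^\top\Delta^y+\alpha\rho(x_k,y_k)\le0$.) *)

From HB Require Import structures.
From mathcomp Require Import all_boot all_order all_algebra.
From mathcomp Require Import all_classical all_reals all_analysis.
Set Implicit Arguments. Unset Strict Implicit. Unset Printing Implicit Defensive.
Import Order.TTheory GRing.Theory Num.Theory.
Import numFieldNormedType.Exports.
Local Open Scope ring_scope.
Local Open Scope classical_set_scope.

Section Defs.
Variables (R : realType) (n m : nat).

Definition dotv (k : nat) (u v : 'rV[R]_k) : R := \sum_(i < k) u 0 i * v 0 i.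
Definition sqn (k : nat) (u : 'rV[R]_k) : R := dotv u u.
Definition enorm2 (u : 'rV[R]_n) (v : 'rV[R]_m) : R := Num.sqrt (sqn u + sqn v).

Local Notation P := ('rV[R]_n * 'rV[R]_m)%type.

Definition is_grad (F : P -> R) (Gx : P -> 'rV[R]_n) (Gy : P -> 'rV[R]_m) :=
  forall z : P, differentiable F z /\
    forall d : P, 'd F z d = dotv (Gx z) d.1 + dotv (Gy z) d.2.

Definition C1_vec (k : nat) (G : P -> 'rV[R]_k) :=
  (forall z : P, differentiable G z) /\
  (forall d : P, continuous (fun z : P => 'd G z d)).

Definition grad_lipschitz (Gx : P -> 'rV[R]_n) (Gy : P -> 'rV[R]_m) (L : R) :=
  forall z z' : P,
    enorm2 (Gx z - Gx z') (Gy z - Gy z') <= L * enorm2 (z.1 - z'.1) (z.2 - z'.2).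

Definition lam (Gfx Ghx : P -> 'rV[R]_n) (Gfy Ghy : P -> 'rV[R]_m)
    (rho : P -> R) (alpha : R) (z : P) : R :=
  if (Ghx z == 0) && (Ghy z == 0) then 0
  else Num.max 0 (- dotv (Ghx z) (Gfx z) - dotv (Ghy z) (Gfy z) + alpha * rho z)
       / (sqn (Ghx z) + sqn (Ghy z)).

Definition dirx Gfx Ghx Gfy Ghy rho alpha (z : P) : 'rV[R]_n :=
  - Gfx z - lam Gfx Ghx Gfy Ghy rho alpha z *: Ghx z.
Definition diry Gfx Ghx Gfy Ghy rho alpha (z : P) : 'rV[R]_m :=
  - Gfy z - lam Gfx Ghx Gfy Ghy rho alpha z *: Ghy z.

Definition alg_step Gfx Ghx Gfy Ghy rho (alpha gamma : R) (z : P) : P :=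
  (z.1 + gamma *: dirx Gfx Ghx Gfy Ghy rho alpha z,
   z.2 + gamma *: diry Gfx Ghx Gfy Ghy rho alpha z).

Definition alg_iter Gfx Ghx Gfy Ghy rho alpha gamma (z0 : P) (k : nat) : P :=
  iter k (alg_step Gfx Ghx Gfy Ghy rho alpha gamma) z0.

End Defs.

(* The direction (Δx, Δy) and the multiplier λ solve the QP of the Algorithm, so
   they satisfy complementary slackness and the linearized constraint
   <∇h, Δ> <= - α ρ.  With the descent lemma and γ (L_f + α L_h) <= 1, the merit
   function f + α h then decreases by γ/2 ‖Δ‖² up to the cross term
   - γ α <∇h, ∇f>, which Young's inequality bounds by γ (ρ + α² L_h² C_f²) / (2 L_h);
   and since γ <= α, h decreases by γ α ρ up to γ α L_h / 2 ‖Δ‖².  Telescoping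
   both inequalities over K steps yields two linear inequalities between
   Σ ‖Δ_k‖² and Σ ρ_k which, with f >= f̄, h >= 0 and h_0 <= α² C_0, solve to
   the two averaged bounds. *)

From HB Require Import structures.
From mathcomp Require Import all_boot all_order all_algebra.
From mathcomp Require Import all_classical all_reals all_analysis.
From mathcomp Require Import ring lra.
Import Order.TTheory GRing.Theory Num.Theory.
Import numFieldNormedType.Exports.
Local Open Scope ring_scope.
Local Open Scope classical_set_scope.
Set Implicit Arguments. Unset Strict Implicit. Unset Printing Implicit Defensive.

Section RowDot.
Variables (R : realType) (k : nat).
Implicit Types u v w : 'rV[R]_k.

Lemma dotvC u v : dotv u v = dotv v u.
Proof. by apply: eq_bigr => i _; rewrite mulrC. Qed.

Lemma dotvDl u v w : dotv (u + v) w = dotv u w + dotv v w.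
Proof. by rewrite /dotv -big_split; apply: eq_bigr => i _; rewrite mxE mulrDl. Qed.

Lemma dotvZl a u w : dotv (a *: u) w = a * dotv u w.
Proof. by rewrite /dotv mulr_sumr; apply: eq_bigr => i _; rewrite mxE mulrA. Qed.

Lemma dotvNl u w : dotv (- u) w = - dotv u w.
Proof. by rewrite -scaleN1r dotvZl mulN1r. Qed.

Lemma dotvDr u v w : dotv w (u + v) = dotv w u + dotv w v.
Proof. by rewrite dotvC dotvDl !(dotvC w). Qed.

Lemma dotvZr a u w : dotv w (a *: u) = a * dotv w u.
Proof. by rewrite dotvC dotvZl dotvC. Qed.

Lemma dotvNr u w : dotv w (- u) = - dotv w u.
Proof. by rewrite dotvC dotvNl dotvC. Qed.

Lemma dotv0l w : dotv 0 w = 0.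
Proof. by rewrite -(scale0r 0) dotvZl mul0r. Qed.

Lemma sqn_ge0 u : 0 <= sqn u.
Proof. by apply: sumr_ge0 => i _; rewrite -expr2 sqr_ge0. Qed.

Lemma sqn_eq0 u : (sqn u == 0) = (u == 0).
Proof.
apply/idP/eqP => [/eqP|->]; last by rewrite /sqn dotv0l.
move=> /psumr_eq0P u0; apply/rowP => i; rewrite mxE.
have /eqP := u0 (fun j _ => ltac:(by rewrite -expr2 sqr_ge0)) i isT.
by rewrite mulf_eq0 orbb => /eqP.
Qed.

End RowDot.

Section PairDot.
Variables (R : realType) (n m : nat).
Local Notation P := ('rV[R]_n * 'rV[R]_m)%type.
Implicit Types u v w : P.

Definition dotp u v : R := dotv u.1 v.1 + dotv u.2 v.2.
Definition sqnp u : R := dotp u u.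
Definition normp u : R := enorm2 u.1 u.2.

Lemma dotpC u v : dotp u v = dotp v u.
Proof. by rewrite /dotp dotvC (dotvC u.2). Qed.

Lemma dotpDr u v w : dotp w (u + v) = dotp w u + dotp w v.
Proof. by rewrite /dotp /= !dotvDr addrACA. Qed.

Lemma dotpZr a u w : dotp w (a *: u) = a * dotp w u.
Proof. by rewrite /dotp /= !dotvZr mulrDr. Qed.

Lemma dotpNr u w : dotp w (- u) = - dotp w u.
Proof. by rewrite /dotp /= !dotvNr opprD. Qed.

Lemma dotpBr u v w : dotp w (u - v) = dotp w u - dotp w v.
Proof. by rewrite dotpDr dotpNr. Qed.

Lemma dotpZl a u w : dotp (a *: u) w = a * dotp u w.
Proof. by rewrite dotpC dotpZr dotpC. Qed.

Lemma dotpBl u v w : dotp (u - v) w = dotp u w - dotp v w.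
Proof. by rewrite dotpC dotpBr !(dotpC w). Qed.

Lemma dotpNl u w : dotp (- u) w = - dotp u w.
Proof. by rewrite dotpC dotpNr dotpC. Qed.

Lemma dotp_dir u v l : dotp v (- u - l *: v) = - dotp v u - l * sqnp v.
Proof. by rewrite dotpBr dotpNr dotpZr. Qed.

Lemma merit_slope_dir u v l a : let d := - u - l *: v in
  dotp u d + a * dotp v d = - sqnp d - a * dotp v u - l * (dotp v d + a * sqnp v).
Proof.
by rewrite /= /sqnp !(dotpBl, dotpBr, dotpNl, dotpNr, dotpZl, dotpZr) (dotpC u v); ring.
Qed.

Lemma sqnp_ge0 u : 0 <= sqnp u.
Proof. exact: addr_ge0 (sqn_ge0 _) (sqn_ge0 _). Qed.

Lemma normp_ge0 u : 0 <= normp u.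
Proof. exact: sqrtr_ge0. Qed.

Lemma sqr_normp u : normp u ^+ 2 = sqnp u.
Proof. by rewrite sqr_sqrtr // sqnp_ge0. Qed.

Lemma sqnpZ a u : sqnp (a *: u) = a ^+ 2 * sqnp u.
Proof. by rewrite /sqnp dotpZl dotpZr mulrA -expr2. Qed.

Lemma normpZ a u : normp (a *: u) = `|a| * normp u.
Proof. by rewrite /normp /enorm2 -[_ + _]/(sqnp _) sqnpZ sqrtrM ?sqr_ge0 // sqrtr_sqr. Qed.

Lemma sqnp_sub u v t : sqnp (u - t *: v) = sqnp u - 2 * t * dotp u v + t ^+ 2 * sqnp v.
Proof.
rewrite /sqnp !(dotpBl, dotpBr, dotpZl, dotpZr) (dotpC v u); ring.
Qed.

Lemma discriminant_le0 (A B C : R) : 0 <= A -> 0 <= C ->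
  (forall t, 0 <= A - 2 * t * B + t ^+ 2 * C) -> B ^+ 2 <= A * C.
Proof.
move=> A0 C0 H; have [Cz|Cn0] := eqVneq C 0.
  have [Bz|Bn0] := eqVneq B 0; first by rewrite Bz Cz expr0n mulr0.
  have := H ((A + 1) / (2 * B)).
  have -> : 2 * ((A + 1) / (2 * B)) * B = A + 1 by field.
  rewrite Cz mulr0; lra.
have Cpos : 0 < C by rewrite lt_def Cn0.
have := H (B / C).
have -> : A - 2 * (B / C) * B + (B / C) ^+ 2 * C = (A * C - B ^+ 2) / C by field.
by rewrite pmulr_lge0 ?invr_gt0 // subr_ge0.
Qed.

Lemma dotp_cauchy_schwarz u v : `|dotp u v| <= normp u * normp v.
Proof.
rewrite -ler_sqr ?nnegrE ?mulr_ge0 ?normp_ge0 // real_normK ?num_real // exprMn !sqr_normp.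
apply: discriminant_le0; rewrite ?sqnp_ge0 // => t.
by rewrite -sqnp_sub sqnp_ge0.
Qed.

Lemma dotp_young u v (c C : R) : 0 <= c -> normp v <= C ->
  2 * c * `|dotp u v| <= sqnp u + c ^+ 2 * C ^+ 2.
Proof.
move=> c_ge0 v_le; rewrite -sqr_normp.
have cs := ler_wpM2l (mulr_ge0 (ler0n _ 2) c_ge0) (dotp_cauchy_schwarz u v).
have vC := ler_wpM2l (mulr_ge0 (mulr_ge0 (ler0n _ 2) c_ge0) (normp_ge0 u)) v_le.
have := sqr_ge0 (normp u - c * C); lra.
Qed.

End PairDot.

Lemma telescope_le (R : realDomainType) (a b c : nat -> R) (N : nat) :
  (forall k, a k.+1 + b k <= a k + c k) ->
  a N + \sum_(k < N) b k <= a 0%N + \sum_(k < N) c k.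
Proof.
move=> step; elim: N => [|N IH]; first by rewrite !big_ord0.
by rewrite !big_ord_recr /=; have := step N; lra.
Qed.

Lemma mean_le (R : realFieldType) (c S B T : R) (K : nat) :
  0 < c -> (0 < K)%N -> c * S <= B -> B = c * K%:R * T -> K%:R^-1 * S <= T.
Proof.
move=> c_gt0 K_gt0 cS BE.
have cK_gt0 : 0 < c * K%:R by rewrite mulr_gt0 ?ltr0n.
rewrite -(ler_pM2l cK_gt0) -BE.
have K_neq0 : K%:R != 0 :> R by rewrite pnatr_eq0 -lt0n.
by have -> : c * K%:R * (K%:R^-1 * S) = c * S by field.
Qed.

Section Descent.
Variables (R : realType) (n m : nat).
Local Notation P := ('rV[R]_n * 'rV[R]_m)%type.
Variables (F : P -> R) (Gx : P -> 'rV[R]_n) (Gy : P -> 'rV[R]_m) (L : R).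
Hypotheses (gradF : is_grad F Gx Gy) (lipG : grad_lipschitz Gx Gy L).

Let grad z : P := (Gx z, Gy z).

Lemma is_derive_line (z d : P) (t : R) :
  is_derive t 1 (fun s : R => F (z + s *: d)) ('d F (z + t *: d) d).
Proof.
have dF := (gradF (z + t *: d)).1.
have E : (fun h : R => h^-1 *: (((fun s : R => F (z + s *: d)) \o shift t) (h *: 1)
            - F (z + t *: d))) =
         (fun h : R => h^-1 *: ((F \o shift (z + t *: d)) (h *: d) - F (z + t *: d))).
  by apply/funext => h /=; rewrite scalerDl [h%:A]mulr1 addrCA.
apply: DeriveDef; first by rewrite /derivable E; exact: diff_derivable.
by rewrite /derive E -deriveE.
Qed.

Lemma dotp_grad_sub_le (w z d : P) :
  dotp (grad w - grad z) d <= L * normp (w - z) * normp d.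
Proof.
apply: le_trans (ler_norm _) _; apply: le_trans (dotp_cauchy_schwarz _ _) _.
by rewrite ler_wpM2r ?normp_ge0 //; exact: lipG.
Qed.

Lemma descent_lemma (z d : P) :
  F (z + d) <= F z + dotp (grad z) d + L / 2 * sqnp d.
Proof.
(* psi t := F (z + t d) - (t B + t² c) is nonincreasing on [0, 1]: the
   Lipschitz gradient bounds its derivative by L t ‖d‖² - 2 t c = 0. *)
set B := dotp (grad z) d; set c := L / 2 * sqnp d.
pose psi : R -> R := ((fun s => F (z + s *: d))
  - (B \*: (@id R : R -> R) + c \*: ((@id R : R -> R) * (@id R : R -> R))))%R.
have psi' (t : R) : is_derive t 1 psi
    ('d F (z + t *: d) d - (B *: 1 + c *: (t *: 1 + t *: 1))).
  by apply: is_deriveB; exact: is_derive_line.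
have slope_le (t : R) : 0 < t -> 'd F (z + t *: d) d - B <= L * t * sqnp d.
  move=> t0; rewrite (gradF _).2.
  have := dotp_grad_sub_le (z + t *: d) z d.
  have -> : z + t *: d - z = t *: d by rewrite addrAC subrr add0r.
  by rewrite normpZ gtr0_norm // -sqr_normp /B dotpBl expr2 !mulrA; apply.
have psi_nonincr : {in `[0, 1]%R &, {homo psi : x y /~ x <= y}}.
  apply: ler0_derive1_le_cc => [x _|x|]; first exact: ex_derive.
    rewrite in_itv /= => /andP[x0 _]; rewrite derive1E derive_val.
    have := slope_le x x0; rewrite [B%:A]mulr1 [x%:A]mulr1.
    have -> : c *: (x + x) = L * x * sqnp d.
      by change (c * (x + x) = L * x * sqnp d); rewrite /c; field.
    lra.
  by apply: derivable_within_continuous => x _; exact: ex_derive.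
have := psi_nonincr 1 0; rewrite !in_itv /= !lexx ler01 => /(_ isT isT isT).
change (F (z + 1 *: d) - (B * 1 + c * (1 * 1)) <= F (z + 0 *: d) - (B * 0 + c * (0 * 0))
  -> F (z + d) <= F z + B + c).
rewrite scale1r scale0r addr0; lra.
Qed.

End Descent.

Section Step.
Variables (R : realType) (n m : nat).
Local Notation P := ('rV[R]_n * 'rV[R]_m)%type.
Variables (Gfx Ghx : P -> 'rV[R]_n) (Gfy Ghy : P -> 'rV[R]_m) (alpha : R).

Let rho z := sqn (Ghx z) + sqn (Ghy z).
Let gradf z : P := (Gfx z, Gfy z).
Let gradh z : P := (Ghx z, Ghy z).
Let lamk z := lam Gfx Ghx Gfy Ghy rho alpha z.
Let dir z : P := (dirx Gfx Ghx Gfy Ghy rho alpha z, diry Gfx Ghx Gfy Ghy rho alpha z).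

Lemma dirE z : dir z = - gradf z - lamk z *: gradh z.
Proof. by []. Qed.

Lemma rho_eq0 z : (rho z == 0) = (Ghx z == 0) && (Ghy z == 0).
Proof. by rewrite /rho paddr_eq0 ?sqn_ge0 // !sqn_eq0. Qed.

(* Also when ∇h z = 0: then [lam] is 0 by definition and both sides vanish. *)
Lemma lam_mul_rho z :
  lamk z * rho z = Num.max 0 (alpha * rho z - dotp (gradh z) (gradf z)).
Proof.
rewrite /lamk /lam -rho_eq0; case: eqP => [r0|/eqP r0].
  have /andP[/eqP hx0 /eqP hy0] : (Ghx z == 0) && (Ghy z == 0) by rewrite -rho_eq0 r0.
  by rewrite r0 /gradh /dotp /= hx0 hy0 !dotv0l !mulr0 addr0 subr0 /Order.max ltxx.
rewrite divfK //; congr Num.max; rewrite /dotp /=; ring.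
Qed.

Lemma lam_eq0 z : alpha * rho z - dotp (gradh z) (gradf z) <= 0 -> lamk z = 0.
Proof.
move=> slack_le0; have [r0|r0] := eqVneq (rho z) 0.
  by rewrite /lamk /lam -rho_eq0 r0 eqxx.
have /eqP := lam_mul_rho z; rewrite (max_idPl slack_le0) mulf_eq0 (negPf r0) orbF.
by move/eqP.
Qed.

Lemma dotp_gradh_dir z : let s := alpha * rho z - dotp (gradh z) (gradf z) in
  dotp (gradh z) (dir z) + alpha * rho z = s - Num.max 0 s.
Proof.
rewrite /= -lam_mul_rho dirE dotp_dir.
by change (sqnp (gradh z)) with (rho z); ring.
Qed.

Lemma lam_complementary z : lamk z * (dotp (gradh z) (dir z) + alpha * rho z) = 0.
Proof.
rewrite dotp_gradh_dir /=; case: (leP 0 (alpha * rho z - _)) => [_|s_lt0].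
  by rewrite subrr mulr0.
by rewrite lam_eq0 ?mul0r // ltW.
Qed.

Lemma dir_feasible z : dotp (gradh z) (dir z) + alpha * rho z <= 0.
Proof. by rewrite dotp_gradh_dir subr_le0 le_max lexx orbT. Qed.

Variables (f h : P -> R) (Lf Lh gamma : R).
Hypotheses (gradf_f : is_grad f Gfx Gfy) (lipf : grad_lipschitz Gfx Gfy Lf).
Hypotheses (gradh_h : is_grad h Ghx Ghy) (liph : grad_lipschitz Ghx Ghy Lh) (Lh_ge0 : 0 <= Lh).

Let next z := alg_step Gfx Ghx Gfy Ghy rho alpha gamma z.

Lemma merit_step z : 0 <= alpha -> 0 <= gamma -> gamma * (Lf + alpha * Lh) <= 1 ->
  f (next z) + alpha * h (next z)
    <= f z + alpha * h z - gamma / 2 * sqnp (dir z)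
       - gamma * alpha * dotp (gradh z) (gradf z).
Proof.
move=> alpha_ge0 gamma_ge0 step_small.
have df := descent_lemma gradf_f lipf z (gamma *: dir z).
have dh := descent_lemma gradh_h liph z (gamma *: dir z).
rewrite !dotpZr sqnpZ in df dh.
have slope := merit_slope_dir (gradf z) (gradh z) (lamk z) alpha.
rewrite /= -dirE (lam_complementary z) in slope.
have quad : gamma ^+ 2 * (Lf + alpha * Lh) * sqnp (dir z) <= gamma * sqnp (dir z).
  rewrite expr2 -!mulrA ler_wpM2l // mulrA ler_piMl ?sqnp_ge0 //.
have := ler_wpM2l alpha_ge0 dh.
have := congr1 (fun x => gamma * x) slope.
change (next z) with (z + gamma *: dir z).
change (Gfx z, Gfy z) with (gradf z) in df.
change (Ghx z, Ghy z) with (gradh z).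
move=> /= slope_gamma dh_alpha; lra.
Qed.

Lemma h_step z : 0 <= gamma -> gamma <= alpha ->
  h (next z) + gamma * alpha * rho z <= h z + gamma * alpha * Lh / 2 * sqnp (dir z).
Proof.
move=> gamma_ge0 gamma_le.
have dh := descent_lemma gradh_h liph z (gamma *: dir z).
rewrite dotpZr sqnpZ in dh.
have feas := ler_wpM2l gamma_ge0 (dir_feasible z).
have quad : gamma ^+ 2 * (Lh * sqnp (dir z)) <= gamma * alpha * (Lh * sqnp (dir z)).
  by rewrite expr2 ler_wpM2r ?mulr_ge0 ?sqnp_ge0 // ler_wpM2l.
change (next z) with (z + gamma *: dir z).
change (Ghx z, Ghy z) with (gradh z) in dh.
lra.
Qed.

Lemma merit_step_bounded z Cf :
  0 <= alpha -> 0 <= gamma -> gamma * (Lf + alpha * Lh) <= 1 -> normp (gradf z) <= Cf ->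
  2 * Lh * (f (next z) + alpha * h (next z)) + gamma * Lh * sqnp (dir z)
    <= 2 * Lh * (f z + alpha * h z) + gamma * (rho z + alpha ^+ 2 * Lh ^+ 2 * Cf ^+ 2).
Proof.
move=> alpha_ge0 gamma_ge0 step_small gradf_le.
have merit := ler_wpM2l (mulr_ge0 (ler0n _ 2) Lh_ge0)
  (merit_step z alpha_ge0 gamma_ge0 step_small).
have young := ler_wpM2l gamma_ge0
  (dotp_young (gradh z) (mulr_ge0 alpha_ge0 Lh_ge0) gradf_le).
have abs_le := ler_wpM2l (mulr_ge0 (mulr_ge0 (mulr_ge0 (ler0n _ 2) Lh_ge0) gamma_ge0) alpha_ge0)
  (ler_norm (- dotp (gradh z) (gradf z))).
rewrite normrN in abs_le; rewrite exprMn in young; change (sqnp (gradh z)) with (rho z) in young.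
lra.
Qed.

Lemma merit_sum (zk : nat -> P) Cf N :
  (forall k, zk k.+1 = next (zk k)) ->
  0 <= alpha -> 0 <= gamma -> gamma * (Lf + alpha * Lh) <= 1 ->
  (forall z, normp (gradf z) <= Cf) ->
  2 * Lh * (f (zk N) + alpha * h (zk N)) + \sum_(k < N) gamma * Lh * sqnp (dir (zk k))
    <= 2 * Lh * (f (zk 0%N) + alpha * h (zk 0%N))
       + \sum_(k < N) gamma * (rho (zk k) + alpha ^+ 2 * Lh ^+ 2 * Cf ^+ 2).
Proof.
move=> zkS alpha_ge0 gamma_ge0 step_small gradf_le.
apply: (telescope_le (a := fun k => 2 * Lh * (f (zk k) + alpha * h (zk k)))
  (b := fun k => gamma * Lh * sqnp (dir (zk k)))
  (c := fun k => gamma * (rho (zk k) + alpha ^+ 2 * Lh ^+ 2 * Cf ^+ 2))) => k.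
by rewrite /= zkS merit_step_bounded.
Qed.

Lemma h_sum (zk : nat -> P) N :
  (forall k, zk k.+1 = next (zk k)) -> 0 <= gamma -> gamma <= alpha ->
  h (zk N) + \sum_(k < N) gamma * alpha * rho (zk k)
    <= h (zk 0%N) + \sum_(k < N) gamma * alpha * Lh / 2 * sqnp (dir (zk k)).
Proof.
move=> zkS gamma_ge0 gamma_le; apply: (telescope_le (a := fun k => h (zk k))
  (b := fun k => gamma * alpha * rho (zk k))
  (c := fun k => gamma * alpha * Lh / 2 * sqnp (dir (zk k)))) => k.
by rewrite /= zkS h_step.
Qed.

End Step.

Theorem theorem1 (R : realType) (n m : nat)
  (f g : 'rV[R]_n * 'rV[R]_m -> R)
  (Gfx : 'rV[R]_n * 'rV[R]_m -> 'rV[R]_n) (Gfy : 'rV[R]_n * 'rV[R]_m -> 'rV[R]_m)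
  (Ggx : 'rV[R]_n * 'rV[R]_m -> 'rV[R]_n) (Ggy : 'rV[R]_n * 'rV[R]_m -> 'rV[R]_m)
  (Ghx : 'rV[R]_n * 'rV[R]_m -> 'rV[R]_n) (Ghy : 'rV[R]_n * 'rV[R]_m -> 'rV[R]_m)
  (Lf Lh Cf alpha C0 gamma : R) (z0 : 'rV[R]_n * 'rV[R]_m) :
  is_grad f Gfx Gfy ->
  continuous Gfx -> continuous Gfy ->
  has_lbound (range f) ->
  0 <= Lf -> grad_lipschitz Gfx Gfy Lf ->
  (forall z, enorm2 (Gfx z) (Gfy z) <= Cf) ->
  is_grad g Ggx Ggy -> C1_vec Ggx -> C1_vec Ggy ->
  is_grad (fun z => sqn (Ggy z)) Ghx Ghy ->
  continuous Ghx -> continuous Ghy ->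
  0 < Lh -> grad_lipschitz Ghx Ghy Lh ->
  0 < alpha -> 0 < C0 ->
  sqn (Ggy z0) <= alpha ^+ 2 * C0 ->
  0 < gamma -> gamma <= alpha -> gamma <= 1 / (Lf + alpha * Lh) ->
  let rho := fun z => sqn (Ghx z) + sqn (Ghy z) in
  let zk := alg_iter Gfx Ghx Gfy Ghy rho alpha gamma z0 in
  let fbar := inf (range f) in
  forall K : nat, (0 < K)%N ->
    (K%:R^-1 * \sum_(k < K)
        (sqn (dirx Gfx Ghx Gfy Ghy rho alpha (zk k))
         + sqn (diry Gfx Ghx Gfy Ghy rho alpha (zk k)))
     <= 4 * (f z0 + alpha ^+ 3 * C0 - fbar) / (gamma * K%:R)
        + 2 * alpha * C0 / (gamma * Lh * K%:R)
        + 2 * alpha ^+ 2 * Lh * Cf ^+ 2)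
    /\
    (K%:R^-1 * \sum_(k < K) (sqn (Ghx (zk k)) + sqn (Ghy (zk k)))
     <= 2 * alpha * C0 / (gamma * K%:R)
        + 2 * Lh * (f z0 + alpha ^+ 3 * C0 - fbar) / (gamma * K%:R)
        + alpha ^+ 2 * Lh ^+ 2 * Cf ^+ 2).
Proof.
move=> gradf_f _ _ f_lb Lf_ge0 lipf gradf_le _ _ _ gradh_h _ _ Lh_gt0 liph
  alpha_gt0 _ h0_le gamma_gt0 gamma_le step_le rho zk fbar K K_gt0.
have step_small : gamma * (Lf + alpha * Lh) <= 1.
  by move: step_le; rewrite ler_pdivlMr // ltr_wpDl ?mulr_gt0.
set X := \sum_(k < K) _; set Y := \sum_(k < K) _.
have merit := merit_sum (zk := zk) gradf_f lipf gradh_h liph (ltW Lh_gt0) K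
  (fun _ => erefl) (ltW alpha_gt0) (ltW gamma_gt0) step_small gradf_le.
have hdec := h_sum (zk := zk) gradh_h liph (ltW Lh_gt0) K (fun _ => erefl)
  (ltW gamma_gt0) gamma_le.
rewrite -!mulr_sumr -/X big_split /= sumr_const card_ord -/Y -[_ *+ K]mulr_natl in merit.
rewrite -!mulr_sumr -/X -/Y /= in hdec.
set E := alpha ^+ 2 * Lh ^+ 2 * Cf ^+ 2 in merit *.
have fK : fbar <= f (zk K) := ge_inf f_lb (imageT f (zk K)).
have hK := sqn_ge0 (Ggy (zk K)).
have Ybound : gamma * Y <= alpha * C0 + gamma * Lh / 2 * X.
  rewrite -(ler_pM2l alpha_gt0); lra.
have Xbound : gamma * Lh * X
    <= 4 * Lh * (f z0 + alpha ^+ 3 * C0 - fbar) + 2 * K%:R * (gamma * E) + 2 * alpha * C0.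
  have := ler_wpM2l (ltW Lh_gt0) fK; have := ler_wpM2l (ltW (mulr_gt0 Lh_gt0 alpha_gt0)) h0_le.
  have := mulr_ge0 (ltW (mulr_gt0 Lh_gt0 alpha_gt0)) hK; lra.
have Ytotal : gamma * Y
    <= 2 * alpha * C0 + 2 * Lh * (f z0 + alpha ^+ 3 * C0 - fbar) + K%:R * (gamma * E).
  lra.
have K_neq0 : K%:R != 0 :> R by rewrite pnatr_eq0 -lt0n.
split; [apply: (mean_le (mulr_gt0 gamma_gt0 Lh_gt0) K_gt0 Xbound)
       | apply: (mean_le gamma_gt0 K_gt0 Ytotal)];
  by rewrite /E; field; rewrite K_neq0 ?gt_eqF.
Qed.
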